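(* Let $c_2,c_3,a_0,a_1,a_2,b_0,b_1$ be constants, $\mu(t)=t^2+c_2t+c_3$, $\phi=a_0\mu(t)^2+a_1\mu(t)+a_2$, $\psi=b_0\mu(t)+b_1$, $\lambda_n=n((n-1)a_0+b_0)$, and $\operatorname{L}_n=\phi\,\mathbb{D}^2+\psi\,\mathbb{S}\mathbb{D}-\lambda_n I$. Assume that for each $n\ge0$ there is a unique monic polynomial $P_n$ of degree $n$ in $\mu(t)$ with $\operatorname{L}_n(P_n)=0$ (i.e. $\phi\,\mathbb{D}^2P_n+\psi\,\mathbb{S}\mathbb{D}P_n=\lambda_nP_n$), and write $P_n=\vartheta_n+p_{1,n}\vartheta_{n-1}+p_{2,n}\vartheta_{n-2}+\cdots$. Then there exist sequences $\{\beta_n\}$ and $\{\gamma_n\}$ such that $$P_{n+1}=(\mu(t)-\beta_n)P_n-\gamma_nP_{n-1},$$ where $$\beta_n=p_{1,n}+f_n+\frac{k_{1,n+1}}{\lambda_n-\lambda_{n+1}},\qquad \gamma_n=\frac{t_n}{\lambda_{n-1}-\lambda_{n+1}},$$ $$t_n=k_{2,n+1}+(f_n+p_{1,n}-\beta_n)k_{1,n}+(p_{1,n}f_{n-1}+p_{2,n}-\beta_np_{1,n})(\lambda_{n-1}-\lambda_{n+1}).$$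
   Context: Operators: $\mathbb{D}f(t)=\frac{f(t+1/2)-f(t-1/2)}{\mu(t+1/2)-\mu(t-1/2)}$, $\mathbb{S}f(t)=\frac{f(t+1/2)+f(t-1/2)}{2}$, acting on polynomials in $\mu(t)$. Basis: $\vartheta_n(t)=(-4)^{-n}(2t+1/2+c_2)_n(-2t+1/2-c_2)_n$ (Pochhammer symbols), $\vartheta_k=0$ for $k<0$, monic of degree $n$ in $\mu(t)$, with $\mu(t)\vartheta_n=\vartheta_{n+1}+f_n\vartheta_n$ and $\mathbb{S}\vartheta_n=\vartheta_n+g_n\vartheta_{n-1}$, where $f_n=-\frac{c_2^2}{4}+\frac{(2n+1)^2}{16}+c_3$, $g_n=\frac{n(2n-1)}4$. Constants: $k_{1,j}=a_0j(j-1)(f_{j-1}+f_{j-2})+b_0jf_{j-1}+a_1j(j-1)+b_0jg_{j-1}+b_1j$, $k_{2,j}=a_0j(j-1)f_{j-2}^2+a_1j(j-1)f_{j-2}+b_0jg_{j-1}f_{j-2}+a_2j(j-1)+b_1jg_{j-1}$. *)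

(* All "functions of t" are polynomials in t over a number field R;
   a "polynomial in mu(t)" is  p \Po mu  with p : {poly R}. *)
From HB Require Import structures.
From mathcomp Require Import all_boot all_order all_algebra.
Set Implicit Arguments. Unset Strict Implicit. Unset Printing Implicit Defensive.
Import Order.TTheory GRing.Theory Num.Theory.
Local Open Scope ring_scope.

Section Defs.
Variable R : numFieldType.
Variables c2 c3 a0 a1 a2 b0 b1 : R.

Definition mu : {poly R} := 'X^2 + c2 *: 'X + c3%:P.

Definition shiftp (h : R) (f : {poly R}) : {poly R} := f \Po ('X + h%:P).

(* D f(t) = (f(t+1/2) - f(t-1/2)) / (mu(t+1/2) - mu(t-1/2)); on polynomials in mu
   this quotient is an exact polynomial division. *)
Definition Dop (f : {poly R}) : {poly R} :=
  (shiftp 2^-1 f - shiftp (- 2^-1) f) %/ (shiftp 2^-1 mu - shiftp (- 2^-1) mu).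

Definition Sop (f : {poly R}) : {poly R} :=
  2^-1 *: (shiftp 2^-1 f + shiftp (- 2^-1) f).

Definition phi : {poly R} := a0 *: mu ^+ 2 + a1 *: mu + a2%:P.
Definition psi : {poly R} := b0 *: mu + b1%:P.

(* lambda_n = n((n-1)a0 + b0), indexed by integers (lambda_{-1} is used) *)
Definition lambda (n : int) : R := n%:~R * ((n - 1)%:~R * a0 + b0).

Definition Lop (n : int) (F : {poly R}) : {poly R} :=
  phi * Dop (Dop F) + psi * Sop (Dop F) - lambda n *: F.

(* vartheta_n(t) = (-4)^{-n} (2t+1/2+c2)_n (-2t+1/2-c2)_n *)
Definition theta (n : nat) : {poly R} :=
  ((-4 : R) ^+ n)^-1 *:
    \prod_(i < n) ((2%:R *: 'X + (2^-1 + c2 + i%:R)%:P) *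
                   (- (2%:R *: 'X) + (2^-1 - c2 + i%:R)%:P)).

Definition theta_m1 (n : nat) : {poly R} := if n is m.+1 then theta m else 0.
Definition theta_m2 (n : nat) : {poly R} := if n is m.+2 then theta m else 0.

Definition fcoef (n : int) : R :=
  - (c2 ^+ 2 / 4%:R) + (2 * n + 1)%:~R ^+ 2 / 16%:R + c3.
Definition gcoef (n : int) : R := n%:~R * (2 * n - 1)%:~R / 4%:R.

Definition k1 (j : int) : R :=
  a0 * j%:~R * (j - 1)%:~R * (fcoef (j - 1) + fcoef (j - 2))
  + b0 * j%:~R * fcoef (j - 1) + a1 * j%:~R * (j - 1)%:~R
  + b0 * j%:~R * gcoef (j - 1) + b1 * j%:~R.

Definition k2 (j : int) : R :=
  a0 * j%:~R * (j - 1)%:~R * fcoef (j - 2) ^+ 2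
  + a1 * j%:~R * (j - 1)%:~R * fcoef (j - 2)
  + b0 * j%:~R * gcoef (j - 1) * fcoef (j - 2)
  + a2 * j%:~R * (j - 1)%:~R + b1 * j%:~R * gcoef (j - 1).

End Defs.

From HB Require Import structures.
From mathcomp Require Import all_boot all_order all_algebra.
From mathcomp Require Import ring zify.
Set Implicit Arguments. Unset Strict Implicit. Unset Printing Implicit Defensive.
Import Order.TTheory GRing.Theory Num.Theory.
Local Open Scope ring_scope.

(* In the basis vartheta_k of polynomials in mu, multiplication by mu and the
   operator L = phi D^2 + psi S D (so that L_n = L - lambda_n) are banded:
   mu vartheta_k = vartheta_{k+1} + f_k vartheta_k and
   L vartheta_k = lambda_k vartheta_k + k_{1,k} vartheta_{k-1} + k_{2,k} vartheta_{k-2}.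
   A coefficientwise computation then shows that L and mu satisfy an Askey-Wilson
   relation.  In the eigenbasis P_k of L, whose eigenvalues lambda_k are distinct by
   uniqueness, this relation kills every coefficient of mu P_n on P_k except for
   k = n-1, n, n+1, which is the three-term recurrence.  Comparing the two leading
   vartheta-coordinates of the recurrence and of L P_{n+1} = lambda_{n+1} P_{n+1}
   identifies beta_n and gamma_n. *)

Section LinearCombination.
Variables (R : nzRingType) (V : lmodType R).
Implicit Types (B : nat -> V) (u v : nat -> R).

Definition lincomb B N v : V := \sum_(0 <= k < N) v k *: B k.

Definition vanish_from N v := forall k, (N <= k)%N -> v k = 0.

Lemma lincombS B N v : lincomb B N.+1 v = lincomb B N v + v N *: B N.
Proof. exact: big_nat_recr. Qed.

Lemma lincomb_recl B N v :
  lincomb B N.+1 v = v 0%N *: B 0%N + lincomb (fun k => B k.+1) N (fun k => v k.+1).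
Proof. exact: big_nat_recl. Qed.

Lemma eq_lincomb B N u v :
  (forall k, (k < N)%N -> u k = v k) -> lincomb B N u = lincomb B N v.
Proof. by move=> uv; apply: eq_big_nat => k /andP[_ /uv->]. Qed.

Lemma eq_lincomb_basis B B' N v : B =1 B' -> lincomb B N v = lincomb B' N v.
Proof. by move=> BB'; apply: eq_bigr => k _; rewrite BB'. Qed.

Lemma lincomb_widen B N M v :
  vanish_from N v -> (N <= M)%N -> lincomb B M v = lincomb B N v.
Proof.
move=> vN; elim: M => [|M IH]; first by rewrite leqn0 => /eqP->.
rewrite leq_eqVlt => /predU1P[<- // | NM].
by rewrite lincombS vN // scale0r addr0 IH.
Qed.

Lemma vanish_from_le N M v : (N <= M)%N -> vanish_from N v -> vanish_from M v.
Proof. by move=> NM vN k Mk; apply: vN (leq_trans NM Mk). Qed.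

Lemma lincombD B N u v :
  lincomb B N u + lincomb B N v = lincomb B N (fun k => u k + v k).
Proof. by rewrite -big_split; apply: eq_bigr => k _; rewrite scalerDl. Qed.

Lemma lincombB B N u v :
  lincomb B N u - lincomb B N v = lincomb B N (fun k => u k - v k).
Proof. by rewrite -sumrB; apply: eq_bigr => k _; rewrite scalerBl. Qed.

Lemma lincombZ B N a v : a *: lincomb B N v = lincomb B N (fun k => a * v k).
Proof. by rewrite scaler_sumr; apply: eq_bigr => k _; rewrite scalerA. Qed.

Lemma lincomb_eq0 B N v : (forall k, (k < N)%N -> v k = 0) -> lincomb B N v = 0.
Proof.
move=> v0; apply: big1_seq => k.
by rewrite mem_index_iota => /andP[_ /v0->]; rewrite scale0r.
Qed.

Lemma lincomb_delta B N j : (j < N)%N -> lincomb B N (fun k => (k == j)%:R) = B j.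
Proof.
move=> jN; rewrite /lincomb (bigD1_seq j) ?mem_index_iota ?iota_uniq //=.
by rewrite eqxx scale1r big1 ?addr0 // => k /negbTE->; rewrite scale0r.
Qed.

End LinearCombination.

Lemma linear_lincomb (R : nzRingType) (U V : lmodType R) (h : {linear U -> V})
    (B : nat -> U) N v :
  h (lincomb B N v) = lincomb (h \o B) N v.
Proof. by rewrite linear_sum; apply: eq_bigr => k _; rewrite linearZ. Qed.

Section MonicBasis.
Variable R : nzRingType.
Implicit Types (B : nat -> {poly R}) (p q : {poly R}) (u v : nat -> R).

Definition monic_basis B := forall k, B k \is monic /\ size (B k) = k.+1.

Lemma size_subr_leq p q N :
  (size p <= N.+1)%N -> (size q <= N.+1)%N -> p`_N = q`_N ->
  (size (p - q)%R <= N)%N.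
Proof.
move=> sp sq pq; apply/leq_sizeP => j; rewrite leq_eqVlt coefB.
case/predU1P => [<- | Nj]; first by rewrite pq subrr.
by rewrite !nth_default ?subrr // (leq_trans sp, leq_trans sq).
Qed.

Section Basis.
Variable B : nat -> {poly R}.
Hypothesis monicB : monic_basis B.

Lemma monic_basis_coef k : (B k)`_k = 1.
Proof. by have [/monicP] := monicB k; rewrite lead_coefE => + BkS; rewrite BkS. Qed.

Lemma size_lincomb_monic N v : (size (lincomb B N v) <= N)%N.
Proof.
elim: N => [|N IH]; first by rewrite /lincomb big_geq ?size_poly0.
rewrite lincombS (leq_trans (size_polyD _ _)) // geq_max (leq_trans IH) //=.
by rewrite (leq_trans (size_scale_leq _ _)) // (monicB N).2.
Qed.

Lemma lincomb_monic_eq0 N v :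
  lincomb B N v = 0 -> forall k, (k < N)%N -> v k = 0.
Proof.
elim: N => [//|N IH] BNv k.
have vN : v N = 0.
  have := congr1 (coefp N) BNv.
  rewrite /= lincombS coefD coefZ monic_basis_coef mulr1 coef0.
  by rewrite nth_default ?size_lincomb_monic ?add0r.
move: BNv; rewrite lincombS vN scale0r addr0 => /IH {}IH.
by rewrite ltnS leq_eqVlt => /predU1P[-> | /IH].
Qed.

Lemma lincomb_monic_inj N u v :
  lincomb B N u = lincomb B N v -> forall k, (k < N)%N -> u k = v k.
Proof.
move=> /eqP; rewrite -subr_eq0 lincombB => /eqP /lincomb_monic_eq0 uv k /uv.
by move/eqP; rewrite subr_eq0 => /eqP.
Qed.

Lemma monic_basis_expand q :
  exists v, vanish_from (size q) v /\ q = lincomb B (size q) v.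
Proof.
move: {2}(size q) (leqnn (size q)) => n; elim: n q => [|n IH] q.
  rewrite leqn0 size_poly_eq0 => /eqP->; exists (fun=> 0).
  by rewrite size_poly0 /lincomb big_geq.
rewrite leq_eqVlt ltnS => /predU1P[sq | /IH//].
pose q' := q - lead_coef q *: B n.
have sq' : (size q' <= n)%N.
  apply: size_subr_leq; rewrite ?sq ?(leq_trans (size_scale_leq _ _)) ?(monicB n).2 //.
  by rewrite coefZ monic_basis_coef mulr1 lead_coefE sq.
have [v [v0 q'v]] := IH q' sq'.
exists (fun k => if k == n then lead_coef q else v k); split.
  move=> k; rewrite sq => nk; rewrite gtn_eqF // v0 //.
  exact: leq_trans sq' (ltnW nk).
rewrite sq lincombS eqxx (@eq_lincomb _ _ _ _ _ v) => [|k /ltn_eqF-> //].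
by rewrite (lincomb_widen _ v0 sq') -q'v subrK.
Qed.

End Basis.
End MonicBasis.

Lemma eq_poly_horner (R : numDomainType) (p q : {poly R}) :
  (forall x, p.[x] = q.[x]) -> p = q.
Proof.
move=> pq; apply/eqP; rewrite -subr_eq0; apply/negPn/negP => pq_neq0.
pose rs : seq R := [seq i%:R | i <- iota 0 (size (p - q))].
have rs_roots : all (root (p - q)) rs.
  by apply/allP => x _; rewrite /root hornerD hornerN pq subrr.
have rs_uniq : uniq rs.
  by rewrite map_inj_uniq ?iota_uniq // => i j /eqP; rewrite eqr_nat => /eqP.
by have := max_poly_roots pq_neq0 rs_roots rs_uniq; rewrite size_map size_iota ltnn.
Qed.

Lemma Sop_is_semilinear (R : numFieldType) : semilinear (@Sop R).
Proof.
rewrite /Sop /shiftp; split=> [a p | p q].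
  by rewrite !comp_polyZ -scalerDr !scalerA mulrC.
by rewrite !comp_polyD addrACA scalerDr.
Qed.

HB.instance Definition _ (R : numFieldType) :=
  GRing.isSemilinear.Build R {poly R} {poly R} _ (@Sop R) (@Sop_is_semilinear R).

Lemma Posz_addn1 (n : nat) : n%:Z + 1 = n.+1%:Z.
Proof. by rewrite intS addrC. Qed.

Lemma Posz_subS1 (n : nat) : n.+1%:Z - 1 = n%:Z.
Proof. by rewrite -Posz_addn1 addrK. Qed.

Section ThetaBasis.
Variables (R : numFieldType) (c2 c3 : R).
Local Notation mu := (mu c2 c3).
Local Notation theta := (theta c2).
Local Notation f k := (fcoef c2 c3 (Posz k)).
Local Notation g k := (gcoef R (Posz k)).

(* [theta n] unfolds to a scaled product, which generic rules such as [hornerZ] or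
   [scalerA] would also match; below they are instantiated explicitly. *)

Lemma mu_horner x : mu.[x] = x ^+ 2 + c2 * x + c3.
Proof. by rewrite /mu !hornerE. Qed.

Lemma shiftp_horner h (p : {poly R}) x : (shiftp h p).[x] = p.[x + h].
Proof. by rewrite /shiftp horner_comp !hornerE. Qed.

Lemma size_mu : size mu = 3.
Proof.
rewrite /mu -addrA size_addl size_polyXn // (leq_ltn_trans (size_polyD _ _)) //.
by rewrite gtn_max size_polyC (leq_ltn_trans (size_scale_leq _ _)) ?size_polyX //=;
  case: (c3 != 0).
Qed.

Lemma comp_mu_inj : injective (comp_poly mu).
Proof.
move=> p q /eqP; rewrite -subr_eq0 -comp_polyB comp_poly_eq0 ?size_mu // subr_eq0.
by move/eqP.
Qed.

Definition Theta n : {poly R} := \prod_(i < n) ('X - (f i)%:P).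

Lemma Theta_monic_basis : monic_basis Theta.
Proof.
move=> n; split; first exact: monic_prod_XsubC.
by rewrite size_prod_XsubC [index_enum _]unlock -enumT size_enum_ord.
Qed.

Lemma theta_horner n x : (theta n).[x] = \prod_(i < n) (mu.[x] - f i).
Proof.
rewrite /theta hornerZ horner_prod.
rewrite (eq_bigr (fun i : 'I_n => -4 * (mu.[x] - f i))) => [|i _]; last first.
  by rewrite !hornerE /fcoef /=; field.
by rewrite prodrMl card_ord mulKf // expf_neq0 // oppr_eq0 pnatr_eq0.
Qed.

Lemma theta_Theta n : theta n = Theta n \Po mu.
Proof.
apply: eq_poly_horner => x; rewrite theta_horner horner_comp horner_prod.
by apply: eq_bigr => i _; rewrite hornerXsubC.
Qed.

Lemma lincomb_theta N v : lincomb theta N v = lincomb Theta N v \Po mu.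
Proof. by rewrite linear_lincomb; apply: eq_lincomb_basis => k; rewrite theta_Theta. Qed.

Lemma lincomb_theta_inj N u v :
  lincomb theta N u = lincomb theta N v -> forall k, (k < N)%N -> u k = v k.
Proof.
by rewrite !lincomb_theta => /comp_mu_inj /(lincomb_monic_inj Theta_monic_basis).
Qed.

Lemma theta0 : theta 0 = 1.
Proof. by rewrite theta_Theta /Theta big_ord0 comp_polyC. Qed.

Lemma thetaS n : theta n.+1 = (mu - (f n)%:P) * theta n.
Proof.
rewrite !theta_Theta /Theta big_ord_recr /= mulrC.
by rewrite comp_polyM comp_polyB comp_polyX comp_polyC.
Qed.

Lemma mul_mu_theta n : mu * theta n = theta n.+1 + f n *: theta n.
Proof. by rewrite thetaS mulrBl mul_polyC subrK. Qed.

Lemma theta_shift_half n x :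
  (theta n).[x + 2^-1] =
    (theta n).[x] + (g n + n%:R * (2 * x + c2) / 2) * (theta_m1 c2 n).[x] /\
  (theta n).[x - 2^-1] =
    (theta n).[x] + (g n - n%:R * (2 * x + c2) / 2) * (theta_m1 c2 n).[x].
Proof.
elim: n => [|n [IHp IHm]].
  by rewrite theta0 /= !hornerE /gcoef; split; field.
rewrite thetaS !(mu_horner, hornerM, hornerD, hornerN, hornerC) IHp IHm /=.
case: n {IHp IHm} => [|n].
  by rewrite theta0 !hornerE /gcoef /fcoef /=; split; field.
rewrite thetaS !(mu_horner, hornerM, hornerD, hornerN, hornerC) /gcoef /fcoef /=.
by split; field.
Qed.

Lemma Dop_theta n : Dop c2 c3 (theta n) = n%:R *: theta_m1 c2 n.
Proof.
have shift_mu : shiftp 2^-1 mu - shiftp (- 2^-1) mu = 2%:P * 'X + c2%:P.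
  by apply: eq_poly_horner => x; rewrite !(hornerE, shiftp_horner, mu_horner); field.
have Dmu_neq0 : 2%:P * 'X + c2%:P != 0 :> {poly R}.
  apply/eqP => /(congr1 (coefp 1)) /eqP.
  by rewrite /= coefD coefCM coefX coefC mulr1 addr0 coef0 pnatr_eq0.
rewrite /Dop shift_mu (_ : _ - _ = (n%:R *: theta_m1 c2 n) * (2%:P * 'X + c2%:P)).
  by rewrite mulpK.
apply: eq_poly_horner => x.
rewrite hornerD hornerN !shiftp_horner hornerM (hornerZ n%:R).
rewrite (theta_shift_half n x).1 (theta_shift_half n x).2.
by rewrite !(hornerD, hornerM, hornerC, hornerX); field.
Qed.

Lemma Sop_theta n : Sop (theta n) = theta n + g n *: theta_m1 c2 n.
Proof.
apply: eq_poly_horner => x.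
rewrite [LHS]hornerZ hornerD !shiftp_horner hornerD (hornerZ (g n)).
by rewrite (theta_shift_half n x).1 (theta_shift_half n x).2; field.
Qed.

Lemma Dop_is_semilinear : semilinear (Dop c2 c3).
Proof.
rewrite /Dop /shiftp; split=> [a p | p q].
  by rewrite !comp_polyZ -scalerBr divpZl.
by rewrite !comp_polyD opprD addrACA divpD.
Qed.

HB.instance Definition _ :=
  GRing.isSemilinear.Build R {poly R} {poly R} _ (Dop c2 c3) Dop_is_semilinear.

Definition mu_coord (v : nat -> R) k := (if k is k'.+1 then v k' else 0) + f k * v k.

Lemma vanish_from_mu_coord N v : vanish_from N v -> vanish_from N.+1 (mu_coord v).
Proof. by move=> vN [|k] // Nk; rewrite /mu_coord !vN ?mulr0 ?addr0 // ltnW. Qed.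

Lemma mul_mu_lincomb N v :
  vanish_from N v -> mu * lincomb theta N v = lincomb theta N.+1 (mu_coord v).
Proof.
move=> vN; rewrite -lincombD lincomb_recl /= (scale0r (theta 0)) add0r.
rewrite lincombS vN // mulr0 (scale0r (theta N)) addr0.
rewrite /lincomb mulr_sumr -big_split; apply: eq_bigr => k _ /=.
by rewrite -scalerAr mul_mu_theta scalerDr (scalerA (v k) (f k)) (mulrC (v k)).
Qed.

Lemma recurrence_coords N b g u v w :
  vanish_from N v -> vanish_from N w ->
  lincomb theta N.+1 u = (mu - b%:P) * lincomb theta N v - g *: lincomb theta N w ->
  forall k, (k < N.+1)%N -> u k = mu_coord v k - b * v k - g * w k.
Proof.
move=> vN wN; rewrite mulrBl (mul_mu_lincomb vN) mul_polyC.
rewrite -(lincomb_widen _ vN (leqnSn N)) -(lincomb_widen _ wN (leqnSn N)).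
by rewrite !lincombZ !lincombB => /lincomb_theta_inj.
Qed.

Section Operator.
Variables a0 a1 a2 b0 b1 : R.
Local Notation lam k := (lambda a0 b0 (Posz k)).
Local Notation K1 k := (k1 c2 c3 a0 a1 b0 b1 (Posz k)).
Local Notation K2 k := (k2 c2 c3 a0 a1 a2 b0 b1 (Posz k)).

Definition Lop0 (F : {poly R}) : {poly R} :=
  phi c2 c3 a0 a1 a2 * Dop c2 c3 (Dop c2 c3 F) + psi c2 c3 b0 b1 * Sop (Dop c2 c3 F).

Lemma LopE n F : Lop c2 c3 a0 a1 a2 b0 b1 n F = Lop0 F - lambda a0 b0 n *: F.
Proof. by []. Qed.

Lemma Lop0_is_semilinear : semilinear Lop0.
Proof.
rewrite /Lop0; split=> [a p | p q]; first by rewrite !linearZ /= -!scalerAr -scalerDr.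
by rewrite !linearD /= !mulrDr addrACA.
Qed.

HB.instance Definition _ :=
  GRing.isSemilinear.Build R {poly R} {poly R} _ Lop0 Lop0_is_semilinear.

Lemma Lop0Z a F : Lop0 (a *: F) = a *: Lop0 F.
Proof. exact: linearZ. Qed.

Lemma Lop0_theta j :
  Lop0 (theta j) = lam j *: theta j + K1 j *: theta_m1 c2 j + K2 j *: theta_m2 c2 j.
Proof.
rewrite /Lop0 Dop_theta [Dop _ _ (_ *: _)]linearZ [Sop (_ *: _)]linearZ /=.
case: j => [|[|j]] /=.
- by rewrite !scale0r !mulr0 addr0 /lambda mul0r scale0r !scaler0 !addr0.
- rewrite Dop_theta Sop_theta /= thetaS theta0.
  apply: eq_poly_horner => x.
  by rewrite /phi /psi !(mu_horner, hornerE) /k1 /lambda /gcoef /fcoef /=; field.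
- rewrite Dop_theta Sop_theta !thetaS; apply: eq_poly_horner => x.
  rewrite /phi /psi !(mu_horner, hornerM, hornerD, hornerN, hornerZ, hornerC).
  rewrite /k1 /k2 /lambda /gcoef /fcoef /=.
  by field; rewrite expf_neq0 // oppr_eq0 pnatr_eq0.
Qed.

Definition Lop0_coord (v : nat -> R) k :=
  lam k * v k + K1 k.+1 * v k.+1 + K2 k.+2 * v k.+2.

Lemma vanish_from_Lop0_coord N v : vanish_from N v -> vanish_from N (Lop0_coord v).
Proof. by move=> vN k Nk; rewrite /Lop0_coord !vN ?mulr0 ?addr0 // ltnW // ltnW. Qed.

Lemma Lop0_lincomb N v :
  vanish_from N v -> Lop0 (lincomb theta N v) = lincomb theta N (Lop0_coord v).
Proof.
move=> vN; have K1v : vanish_from N (fun k => K1 k * v k).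
  by move=> k Nk; rewrite vN ?mulr0.
have K2v : vanish_from N (fun k => K2 k * v k).
  by move=> k Nk; rewrite vN ?mulr0.
have -> : Lop0 (lincomb theta N v) = lincomb theta N (fun k => lam k * v k)
    + lincomb (theta_m1 c2) N.+1 (fun k => K1 k * v k)
    + lincomb (theta_m2 c2) N.+2 (fun k => K2 k * v k).
  rewrite linear_lincomb !(lincomb_widen _ K1v, lincomb_widen _ K2v) ?leqW //.
  rewrite /lincomb -!big_split; apply: eq_bigr => k _ /=.
  by rewrite Lop0_theta !scalerDr !scalerA !(mulrC (v k)).
rewrite !lincomb_recl /= !scaler0 !add0r !lincombD.
by apply: eq_lincomb.
Qed.

(* The Askey-Wilson relation between Lop0 and multiplication by mu.  Both operators
   are banded on theta-coordinates, where it becomes the identity askey_wilson_coord. *)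
Definition askey_wilson (F : {poly R}) : {poly R} :=
  Lop0 (Lop0 (mu * F)) - 2 *: Lop0 (mu * Lop0 F) + mu * Lop0 (Lop0 F)
  - (2 * a0) *: (Lop0 (mu * F) + mu * Lop0 F) - (b0 ^+ 2 - 2 * a0 * b0) *: (mu * F)
  - 2 *: Lop0 (Lop0 F) - (2 * a1 - b0) *: Lop0 F - ((b0 - 2 * a0) * b1) *: F.

Lemma askey_wilson_coord v k :
  Lop0_coord (Lop0_coord (mu_coord v)) k - 2 * Lop0_coord (mu_coord (Lop0_coord v)) k
  + mu_coord (Lop0_coord (Lop0_coord v)) k
  - 2 * a0 * (Lop0_coord (mu_coord v) k + mu_coord (Lop0_coord v) k)
  - (b0 ^+ 2 - 2 * a0 * b0) * mu_coord v k
  - 2 * Lop0_coord (Lop0_coord v) k - (2 * a1 - b0) * Lop0_coord v k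
  - (b0 - 2 * a0) * b1 * v k = 0.
Proof.
by case: k => [|k]; rewrite /Lop0_coord /mu_coord /k1 /k2 /fcoef /gcoef /lambda /=; field.
Qed.

Lemma askey_wilson_comp_mu q : askey_wilson (q \Po mu) = 0.
Proof.
have [v [vq ->]] := monic_basis_expand Theta_monic_basis q.
rewrite -lincomb_theta.
move: (size q) vq => N vN; rewrite /askey_wilson.
have vLN := vanish_from_Lop0_coord vN; have vLLN := vanish_from_Lop0_coord vLN.
have vXN := vanish_from_mu_coord vN; have vXLN := vanish_from_mu_coord vLN.
rewrite (mul_mu_lincomb vN) (Lop0_lincomb vXN) (Lop0_lincomb (vanish_from_Lop0_coord vXN)).
rewrite (Lop0_lincomb vN) (mul_mu_lincomb vLN) (Lop0_lincomb vXLN) (Lop0_lincomb vLN).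
rewrite (mul_mu_lincomb vLLN).
rewrite -(lincomb_widen _ vN (leqnSn N)) -(lincomb_widen _ vLN (leqnSn N)).
rewrite -(lincomb_widen _ vLLN (leqnSn N)).
rewrite !(lincombZ, lincombD, lincombB); apply: lincomb_eq0 => k _.
by rewrite -[RHS](askey_wilson_coord v k); ring.
Qed.

Lemma aw_form_lambda (k n : int) :
  (lambda a0 b0 k - lambda a0 b0 n) ^+ 2 - 2 * a0 * (lambda a0 b0 k + lambda a0 b0 n)
  - (b0 ^+ 2 - 2 * a0 * b0)
  = (lambda a0 b0 k - lambda a0 b0 (n + 1)) * (lambda a0 b0 k - lambda a0 b0 (n - 1)).
Proof. by rewrite /lambda; ring. Qed.

Section Recurrence.
Variable P : nat -> {poly R}.
Hypothesis P_eigen : forall n : nat, P n \is monic /\ size (P n) = n.+1 /\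
  Lop c2 c3 a0 a1 a2 b0 b1 n%:Z (P n \Po mu) = 0.
Hypothesis P_unique : forall (n : nat) (q : {poly R}), q \is monic -> size q = n.+1 ->
  Lop c2 c3 a0 a1 a2 b0 b1 n%:Z (q \Po mu) = 0 -> q = P n.

Local Notation F k := (P k \Po mu).

Lemma P_monic_basis : monic_basis P.
Proof. by move=> n; have [? []] := P_eigen n. Qed.

Lemma Lop0_F n : Lop0 (F n) = lam n *: F n.
Proof. by apply/eqP; rewrite -subr_eq0 -LopE (P_eigen n).2.2. Qed.

Lemma Lop0_lincomb_F N v :
  Lop0 (lincomb (fun k => F k) N v) = lincomb (fun k => F k) N (fun k => lam k * v k).
Proof.
rewrite linear_lincomb; apply: eq_bigr => k _ /=.
by rewrite Lop0_F scalerA mulrC.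
Qed.

Lemma lincomb_F_eq0 N v :
  lincomb (fun k => F k) N v = 0 -> forall k, (k < N)%N -> v k = 0.
Proof.
move=> Fv; apply: (lincomb_monic_eq0 P_monic_basis); apply: comp_mu_inj.
by rewrite linear_lincomb comp_poly0; exact: Fv.
Qed.

(* Otherwise P m + P k would be a second monic eigenpolynomial of degree m. *)
Lemma lambda_neq k m : (k < m)%N -> lam k != lam m.
Proof.
move=> km; apply/eqP => lamkm.
have [[Pk_monic [Pk_size _]] [Pm_monic [Pm_size _]]] := (P_eigen k, P_eigen m).
have size_km : (size (P k) < size (P m))%N by rewrite Pk_size Pm_size.
have : P m + P k = P m + 0.
  rewrite addr0; apply: P_unique.
  - by rewrite monicE lead_coefDl // -monicE.
  - by rewrite size_polyDl.
  - by rewrite LopE comp_polyD linearD /= !Lop0_F lamkm scalerDr subrr.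
by move/addrI/eqP; rewrite (negbTE (monic_neq0 Pk_monic)).
Qed.

Lemma mul_mu_F_coord n C : mu * F n = lincomb (fun k => F k) n.+2 C ->
  forall k, (k < n.+2)%N -> k != n ->
  (lam k - lambda a0 b0 (n%:Z + 1)) * (lam k - lambda a0 b0 (n%:Z - 1)) * C k = 0.
Proof.
move=> muF; have Fn : F n = lincomb (fun k => F k) n.+2 (fun k => (k == n)%:R).
  by rewrite lincomb_delta // ltnW.
have := askey_wilson_comp_mu (P n); rewrite /askey_wilson.
rewrite !Lop0_F !Lop0Z !Lop0_F -!scalerAr muF !Lop0Z !Lop0_lincomb_F Fn.
rewrite !(lincombZ, lincombD, lincombB) => /lincomb_F_eq0 AW k kn /negbTE knF.
by move: (AW k kn); rewrite knF /= -aw_form_lambda => <-; ring.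
Qed.

Lemma three_term_recurrence n : exists b g : R,
  P n.+1 = ('X - b%:P) * P n - g *: (if n is m.+1 then P m else 0).
Proof.
have [[Pn_monic [Pn_size _]] [PSn_monic [PSn_size _]]] := (P_eigen n, P_eigen n.+1).
have size_Q : (size ('X * P n - P n.+1)%R <= n.+1)%N.
  apply: size_subr_leq; rewrite ?PSn_size // ?coefXM.
    by rewrite mulrC size_mulX ?monic_neq0 // Pn_size.
  by rewrite !(monic_basis_coef P_monic_basis).
have [v [vQ Qv]] := monic_basis_expand P_monic_basis ('X * P n - P n.+1).
rewrite -(lincomb_widen _ vQ size_Q) in Qv.
pose C k := v k + (k == n.+1)%:R.
have muF : mu * F n = lincomb (fun k => F k) n.+2 C.
  rewrite -lincombD lincomb_delta // (lincomb_widen _ (vanish_from_le size_Q vQ)) //.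
  have -> : lincomb (fun k => F k) n.+1 v = ('X * P n - P n.+1) \Po mu.
    by rewrite Qv linear_lincomb.
  by rewrite comp_polyB comp_polyM comp_polyX subrK.
have v_low k : (k.+1 < n)%N -> v k = 0.
  move=> kn; have [m n_eq] : exists m, n = m.+1 by exists n.-1; lia.
  have [kn2 kn'] : (k < n.+2)%N /\ k != n by split; lia.
  have Ck : C k = v k by rewrite /C ltn_eqF ?addr0 //; lia.
  move: (mul_mu_F_coord muF kn2 kn') => /eqP.
  rewrite Ck n_eq Posz_addn1 Posz_subS1 !mulf_eq0 !subr_eq0.
  by rewrite !(negbTE (lambda_neq _)) //=; [move/eqP | lia | lia].
have PSn : P n.+1 = 'X * P n - lincomb P n.+1 v by rewrite -Qv opprB addrC subrK.
have low0 : lincomb P n.-1 v = 0 by apply: lincomb_eq0 => k kn; apply: v_low; lia.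
case: n {v_low Qv vQ size_Q C muF Pn_monic Pn_size PSn_monic PSn_size} PSn low0
  => [|m] -> low0.
  by exists (v 0%N), 0; rewrite lincombS low0 add0r scaler0 subr0 mulrBl mul_polyC.
exists (v m.+1), (v m); rewrite !lincombS low0 add0r mulrBl mul_polyC.
by rewrite opprD addrA addrAC.
Qed.

Section Coefficients.
Variables p1 p2 : nat -> R.
Hypotheses (p1_0 : p1 0%N = 0) (p2_0 : p2 0%N = 0) (p2_1 : p2 1%N = 0).
Hypothesis P_expansion : forall n : nat, exists r : {poly R}, (size r <= n - 2)%N /\
  F n = theta n + p1 n *: theta_m1 c2 n + p2 n *: theta_m2 c2 n + (r \Po mu).

(* The last two components say v_{n-1} = p1 n and v_{n-2} = p2 n, where a negative
   index is read as the coefficient 0. *)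
Lemma theta_coords n : exists v, [/\ vanish_from n.+1 v, F n = lincomb theta n.+1 v,
  v n = 1, (if n is n'.+1 then v n' else 0) = p1 n
  & (if n is n'.+2 then v n' else 0) = p2 n].
Proof.
have [r [size_r ->]] := P_expansion n.
have [w [wr ->]] := monic_basis_expand Theta_monic_basis r.
have w0 k : (n - 2 <= k)%N -> w k = 0 by move=> nk; apply: (vanish_from_le size_r wr).
have deltaF (i j : nat) : i != j -> (i == j)%:R = 0 :> R by move/negbTE->.
exists (fun k => w k + (k == n)%:R + p1 n * (k.+1 == n)%:R + p2 n * (k.+2 == n)%:R).
split.
- by move=> k nk; rewrite w0 ?deltaF ?mulr0 ?addr0 //; lia.
- rewrite -!lincombD -!lincombZ lincomb_delta // lincomb_theta.
  rewrite -(lincomb_widen _ wr (_ : size r <= n.+1)%N); last by lia.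
  have -> : lincomb theta n.+1 (fun k => (k.+1 == n)%:R) = theta_m1 c2 n.
    case: n {size_r w0} => [|n]; last by rewrite /= lincomb_delta.
    by rewrite lincomb_eq0.
  have -> : lincomb theta n.+1 (fun k => (k.+2 == n)%:R) = theta_m2 c2 n.
    case: n {size_r w0} => [|[|n]]; try by rewrite lincomb_eq0.
    by rewrite /= lincomb_delta // ltnW.
  by rewrite -lincomb_theta addrC !addrA.
- by rewrite eqxx w0 ?deltaF ?mulr0 ?addr0 ?add0r //; lia.
- case: n {size_r wr} w0 => [|n] w0 //.
  by rewrite eqxx w0 ?deltaF ?mulr1 ?mulr0 ?addr0 ?add0r //; lia.
- case: n {size_r wr} w0 => [|[|n]] w0 //.
  by rewrite eqxx w0 ?deltaF ?mulr1 ?mulr0 ?addr0 ?add0r //; lia.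
Qed.

Lemma eigen_coords n v : vanish_from n.+1 v -> F n = lincomb theta n.+1 v ->
  forall k, (k <= n)%N -> Lop0_coord v k = lam n * v k.
Proof.
by move=> vn Fv; have := Lop0_F n; rewrite Fv (Lop0_lincomb vn) lincombZ => /lincomb_theta_inj.
Qed.

Lemma p1_eigen n : (lam n.+1 - lam n) * p1 n.+1 = K1 n.+1.
Proof.
have [v [vn Fv v1 vp1 _]] := theta_coords n.+1.
move: (eigen_coords vn Fv (leqnSn n)); rewrite /Lop0_coord vp1 v1 (vn n.+2) //.
by move=> Lv; rewrite mulrBl -Lv; ring.
Qed.

Lemma p2_eigen n : (lam n.+2 - lam n) * p2 n.+2 = K2 n.+2 + p1 n.+2 * K1 n.+1.
Proof.
have [v [vn Fv v1 vp1 vp2]] := theta_coords n.+2.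
move: (eigen_coords vn Fv (leqW (leqnSn n))); rewrite /Lop0_coord vp1 vp2 v1.
by move=> Lv; rewrite mulrBl -Lv; ring.
Qed.

Lemma prev_coords n : exists2 w, vanish_from n w &
  (if n is m.+1 then P m else 0) \Po mu = lincomb theta n w.
Proof.
case: n => [|m]; first by exists (fun=> 0); rewrite ?comp_poly0 ?lincomb_eq0.
by have [w [wm Fw _ _ _]] := theta_coords m; exists w.
Qed.

Lemma comp_mu_recurrence n b g (Q : {poly R}) :
  P n.+1 = ('X - b%:P) * P n - g *: Q -> F n.+1 = (mu - b%:P) * F n - g *: (Q \Po mu).
Proof.
by move->; rewrite comp_polyB comp_polyM comp_polyZ comp_polyB comp_polyX comp_polyC.
Qed.

Lemma beta_coef n b g :
  P n.+1 = ('X - b%:P) * P n - g *: (if n is m.+1 then P m else 0) ->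
  p1 n.+1 = p1 n + f n - b.
Proof.
move=> /comp_mu_recurrence rec.
have [u [_ Fu _ up1 _]] := theta_coords n.+1.
have [v [vn Fv vn1 vp1 _]] := theta_coords n.
have [w wn Fw] := prev_coords n.
rewrite Fu Fv Fw -(lincomb_widen _ wn (leqnSn n)) in rec.
move: (recurrence_coords vn (vanish_from_le (leqnSn n) wn) rec (leqnSn n.+1)).
by rewrite up1 /mu_coord vp1 vn1 (wn n (leqnn n)) => ->; ring.
Qed.

Lemma gamma_coef n b g :
  P n.+2 = ('X - b%:P) * P n.+1 - g *: P n ->
  p2 n.+2 = p2 n.+1 + (f n - b) * p1 n.+1 - g.
Proof.
move=> /comp_mu_recurrence rec.
have [u [_ Fu _ _ up2]] := theta_coords n.+2.
have [v [vn Fv _ vp1 vp2]] := theta_coords n.+1.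
have [w [wn Fw w1 _ _]] := theta_coords n.
have vp2' : (if n is n'.+1 then v n' else 0) = p2 n.+1.
  by case: n {u Fu up2 vn Fv vp1 w wn Fw w1 rec} vp2.
rewrite Fu Fv Fw -(lincomb_widen _ wn (leqnSn n.+1)) in rec.
have n_lt : (n < n.+3)%N by lia.
move: (recurrence_coords vn (vanish_from_le (leqnSn n.+1) wn) rec n_lt).
by rewrite up2 /mu_coord vp1 vp2' w1 => ->; ring.
Qed.

Lemma beta_formula n b g :
  P n.+1 = ('X - b%:P) * P n - g *: (if n is m.+1 then P m else 0) ->
  b = p1 n + f n + K1 n.+1 / (lam n - lam n.+1).
Proof.
move=> /beta_coef b_eq; rewrite -(p1_eigen n) b_eq.
by field; rewrite subr_eq0 lambda_neq.
Qed.

Lemma gamma_formula n b g :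
  P n.+2 = ('X - b%:P) * P n.+1 - g *: P n ->
  g = (K2 n.+2 + (f n.+1 + p1 n.+1 - b) * K1 n.+1
       + (p1 n.+1 * f n + p2 n.+1 - b * p1 n.+1) * (lam n - lam n.+2))
      / (lam n - lam n.+2).
Proof.
move=> rec; have p1_eq : p1 n.+2 = f n.+1 + p1 n.+1 - b by rewrite (beta_coef rec); ring.
rewrite -p1_eq -(p2_eigen n) (gamma_coef rec).
by field; rewrite subr_eq0 lambda_neq.
Qed.

End Coefficients.

End Recurrence.

End Operator.
End ThetaBasis.

Theorem lemma4p4 (R : numFieldType) (c2 c3 a0 a1 a2 b0 b1 : R)
    (P : nat -> {poly R}) (p1 p2 : nat -> R) :
  (* P n is a monic polynomial of degree n in mu(t) with L_n(P_n) = 0 ... *)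
  (forall n : nat, P n \is monic /\ size (P n) = n.+1 /\
     Lop c2 c3 a0 a1 a2 b0 b1 n%:Z (P n \Po mu c2 c3) = 0) ->
  (* ... and it is the unique such polynomial *)
  (forall (n : nat) (q : {poly R}), q \is monic -> size q = n.+1 ->
     Lop c2 c3 a0 a1 a2 b0 b1 n%:Z (q \Po mu c2 c3) = 0 -> q = P n) ->
  (* P_n = vartheta_n + p_{1,n} vartheta_{n-1} + p_{2,n} vartheta_{n-2} + (deg <= n-3 in mu),
     with the convention that coefficients of vartheta_k, k < 0, vanish *)
  p1 0%N = 0 -> p2 0%N = 0 -> p2 1%N = 0 ->
  (forall n : nat, exists r : {poly R}, (size r <= n - 2)%N /\
     P n \Po mu c2 c3 = theta c2 n + p1 n *: theta_m1 c2 n + p2 n *: theta_m2 c2 n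
                        + (r \Po mu c2 c3)) ->
  exists beta gamma : nat -> R,
    (forall n : nat, beta n = p1 n + fcoef c2 c3 n%:Z
        + k1 c2 c3 a0 a1 b0 b1 (n%:Z + 1) / (lambda a0 b0 n%:Z - lambda a0 b0 (n%:Z + 1))) /\
    (forall n : nat, gamma n =
        (k2 c2 c3 a0 a1 a2 b0 b1 (n%:Z + 1)
         + (fcoef c2 c3 n%:Z + p1 n - beta n) * k1 c2 c3 a0 a1 b0 b1 n%:Z
         + (p1 n * fcoef c2 c3 (n%:Z - 1) + p2 n - beta n * p1 n)
             * (lambda a0 b0 (n%:Z - 1) - lambda a0 b0 (n%:Z + 1)))
        / (lambda a0 b0 (n%:Z - 1) - lambda a0 b0 (n%:Z + 1))) /\
    (forall n : nat, P n.+1 \Po mu c2 c3 =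
        (mu c2 c3 - (beta n)%:P) * (P n \Po mu c2 c3)
        - gamma n *: (if n is m.+1 then P m \Po mu c2 c3 else 0)).
Proof.
move=> P_eigen P_unique p1_0 p2_0 p2_1 P_expansion.
eexists; eexists; split; first by move=> n; reflexivity.
split; first by move=> n; reflexivity.
move=> n; have [b [g rec]] := three_term_recurrence P_eigen P_unique n.
have beta_b := beta_formula P_eigen P_unique p1_0 p2_0 p2_1 P_expansion rec.
rewrite Posz_addn1 -beta_b (comp_mu_recurrence c2 c3 rec).
case: n rec {beta_b} => [|m] rec; first by rewrite comp_poly0 !scaler0.
have gamma_g := gamma_formula P_eigen P_unique p1_0 p2_0 p2_1 P_expansion rec.
by rewrite Posz_subS1 -gamma_g.
Qed.
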